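(* Consider the compulsory constrained two-facility location setting described in the context, with $n$ agents at locations $\mathbf{x}=(x_1,\dots,x_n)\in\mathbb{R}^n$ and alternative multiset $A=\{a_1\le a_2\le\dots\le a_m\}$, $m\ge 2$. Fix any $i\in\{1,\dots,n\}$ and let $\mathbf{x}_{(i)}$ be the $i$-th smallest entry of $\mathbf{x}$. The mechanism that, on every reported profile $\mathbf{x}$, outputs the peak of the point $\mathbf{x}_{(i)}$ in $AP$ (i.e. the pair $(a_k,a_{k+1})$ with $\mathbf{x}_{(i)}\in Z_k$) is group strategyproof.
   Context: Agents $1,\dots,n$ have private locations $x_j\in\mathbb{R}$ and each is served by both facilities $F_1,F_2$. $A=\{a_1,\dots,a_m\}$ is a multiset of real alternative locations with $a_1\le\dots\le a_m$; a feasible outcome places $F_1$ at $y_1\in A$ and $F_2$ at $y_2\in A\setminus\{y_1\}$ (removing one copy from the multiset), i.e. at most one facility per element of $A$. The cost of agent $j$ under $\mathbf{y}=(y_1,y_2)$ is $c_j(\mathbf{y},x_j)=\max\{|y_1-x_j|,|y_2-x_j|\}$. Let $AP=\{(a_1,a_2),(a_2,a_3),\dots,(a_{m-1},a_m)\}$. The zones are $Z_1=(-\infty,\frac{a_1+a_3}{2}]$, $Z_k=(\frac{a_{k-1}+a_{k+1}}{2},\frac{a_k+a_{k+2}}{2}]$ for $2\le k\le m-2$, $Z_{m-1}=(\frac{a_{m-2}+a_m}{2},\infty)$ (with $Z_1=\mathbb{R}$ if $m=2$); they partition $\mathbb{R}$, and the peak in $AP$ of a point $z\in Z_k$ is $(a_k,a_{k+1})$.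 A mechanism maps reported locations to a feasible outcome. It is group strategyproof if for every true profile $\mathbf{x}$, every nonempty $S\subseteq N$ and every misreport $\mathbf{x}'_S$, some $j\in S$ satisfies $c_j(f(\mathbf{x}),x_j)\le c_j(f(\mathbf{x}'_S,\mathbf{x}_{-S}),x_j)$. *)

From HB Require Import structures.
From mathcomp Require Import all_boot all_order all_algebra.
From mathcomp Require Import reals.
Set Implicit Arguments. Unset Strict Implicit. Unset Printing Implicit Defensive.
Import Order.TTheory GRing.Theory Num.Theory.
Local Open Scope ring_scope.

Section Defs.
Variable R : realType.

(* a : seq R is the sorted multiset A = {a_1 <= ... <= a_m}, 0-based: a`_0 .. a`_(m-1). *)

Definition cost (y : R * R) (xj : R) : R := Num.max `|y.1 - xj| `|y.2 - xj|.

(* Zone Z_{k+1} of the paper (0-based index k, 0 <= k <= m-2):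
   lower bound (a_{k-1}+a_{k+1})/2 < z when k > 0 (paper: k+1 >= 2),
   upper bound z <= (a_k+a_{k+2})/2 when k < m-2 (paper: k+1 <= m-2).
   For m = 2 this gives Z = R. *)
Definition in_zone (a : seq R) (k : nat) (z : R) : Prop :=
  (k < (size a).-1)%N /\
  ((0 < k)%N -> (a`_k.-1 + a`_k.+1) / 2%:R < z) /\
  ((k < (size a).-2)%N -> z <= (a`_k + a`_k.+2) / 2%:R).

Definition peak_pair (a : seq R) (k : nat) : R * R := (a`_k, a`_k.+1).

Definition order_stat (n : nat) (i : 'I_n) (x : 'I_n -> R) : R :=
  nth 0 (sort <=%R [seq x j | j <- enum 'I_n]) i.

Definition deviate (n : nat) (S : {set 'I_n}) (x' x : 'I_n -> R) : 'I_n -> R :=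
  fun j => if j \in S then x' j else x j.

Definition group_strategyproof (n : nat) (f : ('I_n -> R) -> R * R) : Prop :=
  forall (x : 'I_n -> R) (S : {set 'I_n}) (x' : 'I_n -> R),
    S != set0 ->
    exists2 j, j \in S &
      cost (f x) (x j) <= cost (f (deviate S x' x)) (x j).

End Defs.

(** Only the reports on the far side of the order statistic [x_(i)] can move
    it.  If a coalition moves [x_(i)] from zone [Z_k] up into a later zone, the
    upper boundary [(a_k + a_(k+2))/2] of [Z_k] separates the two order
    statistics, so some member reported truthfully at or below it and now
    reports above it.  From a location that low, the new peak's right
    facility [a_(k'+1) >= a_(k+2)] is at least as far as both [a_k] and
    [a_(k+1)], so this member does not gain.  Moving [x_(i)] down is
    symmetric, with the lower boundary [(a_(k-1) + a_(k+1))/2] of [Z_k]. *)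
From mathcomp Require Import all_boot all_order all_algebra.
From mathcomp Require Import reals.
From mathcomp Require Import lra zify.
Set Implicit Arguments. Unset Strict Implicit. Unset Printing Implicit Defensive.
Import Order.TTheory GRing.Theory Num.Theory.
Local Open Scope ring_scope.

Section OrderStatistic.
Variables (R : realType) (n : nat).
Implicit Types (x y : 'I_n -> R) (t : R).

Lemma order_stat_leE (i : 'I_n) x t :
  (order_stat i x <= t) = (i < count (<= t) [seq x j | j <- enum 'I_n])%N.
Proof.
rewrite /order_stat -(count_sort <=%R); set s := sort _ _.
have s_sorted : sorted <=%R s := sort_le_sorted _.
have i_lt_s : (i < size s)%N by rewrite size_sort size_map size_enum_ord.
apply/idP/idP => [|/(nth_count_le 0 s_sorted)//].
apply: contraLR; rewrite -leqNgt -ltNge => count_le_i.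
by apply: nth_count_gt => //; rewrite count_le_i.
Qed.

Lemma order_stat_cross (i : 'I_n) x y t :
  order_stat i x <= t -> t < order_stat i y -> exists j, x j <= t < y j.
Proof.
rewrite ltNge !order_stat_leE => ix_le /negP iy_gt.
have [j cross_j|no_cross] := pickP (fun j => (x j <= t) && (t < y j)).
  by exists j.
exfalso; apply: iy_gt; apply: leq_trans ix_le _; rewrite !count_map.
apply: sub_count => j /= xj_le; move: (no_cross j) => /=.
by rewrite xj_le /= ltNge => /negbFE.
Qed.

End OrderStatistic.

Section Peaks.
Variables (R : realType) (a : seq R).
Hypothesis a_sorted : sorted <=%R a.

Definition midpoint (p q : nat) : R := (a`_p + a`_q) / 2%:R.

Lemma sorted_nth_le (p q : nat) : (p <= q)%N -> (q < size a)%N -> a`_p <= a`_q.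
Proof.
move=> le_pq lt_q; apply: (sorted_leq_nth le_trans lexx 0 a_sorted) => //.
by rewrite inE (leq_ltn_trans le_pq).
Qed.

Lemma midpoint_le (p q p' q' : nat) :
  (p <= p')%N -> (q <= q')%N -> (p' <= q' < size a)%N ->
  midpoint p q <= midpoint p' q'.
Proof.
move=> le_p le_q /andP[le_pq' lt_q'].
have ap : a`_p <= a`_p' by apply: sorted_nth_le => //; lia.
have aq : a`_q <= a`_q' by exact: sorted_nth_le.
rewrite /midpoint; lra.
Qed.

Lemma cost_peak_le_right (k k' : nat) (xj : R) :
  (k < k')%N -> (k'.+1 < size a)%N -> xj <= midpoint k k.+2 ->
  cost (peak_pair a k) xj <= cost (peak_pair a k') xj.
Proof.
rewrite /midpoint => lt_k lt_k' xj_le.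
have a01 : a`_k <= a`_k.+1 by apply: sorted_nth_le; lia.
have a12 : a`_k.+1 <= a`_k.+2 by apply: sorted_nth_le; lia.
have a2k' : a`_k.+2 <= a`_k'.+1 by apply: sorted_nth_le.
rewrite /cost /= le_max; apply/orP; right.
rewrite [`|a`_k'.+1 - xj|]ger0_norm; last lra.
by rewrite ge_max !ler_norml; apply/andP; split; apply/andP; split; lra.
Qed.

Lemma cost_peak_le_left (k k' : nat) (xj : R) :
  (k' < k)%N -> (k.+1 < size a)%N -> midpoint k.-1 k.+1 <= xj ->
  cost (peak_pair a k) xj <= cost (peak_pair a k') xj.
Proof.
rewrite /midpoint => lt_k' lt_k xj_ge.
have a01 : a`_k.-1 <= a`_k by apply: sorted_nth_le; lia.
have a12 : a`_k <= a`_k.+1 by apply: sorted_nth_le; lia.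
have ak'0 : a`_k' <= a`_k.-1 by apply: sorted_nth_le; lia.
rewrite /cost /= le_max; apply/orP; left.
rewrite [`|a`_k' - xj|]ler0_norm; last lra.
by rewrite ge_max !ler_norml; apply/andP; split; apply/andP; split; lra.
Qed.

End Peaks.

Lemma deviate_moved (R : realType) (n : nat) (S : {set 'I_n})
    (x' x : 'I_n -> R) (j : 'I_n) :
  deviate S x' x j != x j -> j \in S.
Proof. by rewrite /deviate; case: ifP => // _; rewrite eqxx. Qed.

Theorem lemma1 (R : realType) (n : nat) (i : 'I_n) (a : seq R)
  (Hm : (2 <= size a)%N) (Hsorted : sorted <=%R a)
  (f : ('I_n -> R) -> R * R)
  (Hf : forall x : 'I_n -> R, exists k : nat,
          in_zone a k (order_stat i x) /\ f x = peak_pair a k) :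
  group_strategyproof f.
Proof.
move=> x S x' /set0Pn[j0 j0S].
have [k [[lt_k [low_x up_x]] ->]] := Hf x.
have [k' [[lt_k' [low_y up_y]] ->]] := Hf (deviate S x' x).
set y := deviate S x' x in low_y up_y *.
case: (ltngtP k k') => [lt_kk'|lt_k'k|<-]; last by exists j0.
- have [j /andP[xj_le lt_yj]] : exists j, x j <= midpoint a k k.+2 < y j.
    apply: (order_stat_cross (i := i)); first by apply: up_x; lia.
    by apply: le_lt_trans (low_y _); [apply: midpoint_le => //; lia | lia].
  exists j; last by apply: cost_peak_le_right => //; lia.
  by apply/(deviate_moved (x' := x'))/negbT/gt_eqF/(le_lt_trans xj_le).
- have [j /andP[yj_le lt_xj]] : exists j, y j <= midpoint a k.-1 k.+1 < x j.
    apply: (order_stat_cross (i := i)); last by apply: low_x; lia.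
    by apply: le_trans (up_y _) _; [lia | apply: midpoint_le => //; lia].
  exists j; last by apply: cost_peak_le_left => //; [lia | exact: ltW].
  by apply/(deviate_moved (x' := x'))/negbT/lt_eqF/(le_lt_trans yj_le).
Qed.
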